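(* Consider a multi-sender single-uniprior index-coding instance with binary messages, information-flow graph $\mathcal{G}$ and message graph $\mathcal{U}$, and let $\mathcal{V}_S$ be the vertex set of a message-disconnected leaf SCC of $\mathcal{G}$. Form $(\mathcal{G}',\mathcal{U}')$ by appending this leaf SCC: add a new dummy vertex $n+1$ to both $\mathcal{G}$ and $\mathcal{U}$ (isolated in $\mathcal{U}'$), representing a receiver whose prior message $x_{n+1}$ is the constant $0$ (known to all receivers and never transmitted), and add an arc $(v\to n+1)$ in $\mathcal{G}$ for an arbitrarily chosen $v\in\mathcal{V}_S$ (so the dummy receiver requests $x_v$); the senders are unchanged. Then \[ N_{\mathrm{SCC}}(\mathcal{G}') = N_{\mathrm{SCC}}(\mathcal{G})-1,\qquad \tilde{\ell}^*(\mathcal{G}',\mathcal{U}')=\tilde{\ell}^*(\mathcal{G},\mathcal{U}),\qquad V_{\mathrm{out}}(\mathcal{G}')=V_{\mathrm{out}}(\mathcal{G}), \] where $N_{\mathrm{SCC}}(\cdot)$ denotes the number of leaf SCCs.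
   Context: Multi-sender single-uniprior index coding with binary messages: there are $n$ receivers and $n$ independent messages $x_1,\dots,x_n$, each a single bit uniformly distributed on $\{0,1\}$. Receiver $i$ knows $x_i$ a priori and requests a set of messages not containing $x_i$. The information-flow graph is the directed graph $\mathcal{G}=(\mathcal{V},\mathcal{A})$, $\mathcal{V}=\{1,\dots,n\}$, with an arc $(j\to i)$ iff receiver $i$ requests $x_j$. There are $S$ senders; sender $s$ knows a subset $\mathcal{M}_s$ of the messages, and every message is known to some sender. An index code consists of, for each sender $s$, an encoding function mapping the messages in $\mathcal{M}_s$ to $\ell_s$ bits, and for each receiver $i$ a decoding function that, from all senders' outputs together with its prior message, returns every message requested by $i$, for all message values; its length is $\sum_s \ell_s$. $\tilde{\ell}^*(\mathcal{G},\mathcal{U})$ is the minimum length of an index code for the instance. The message graph $\mathcal{U}$ is the undirected graph on $\mathcal{V}$ with an edge $\{i,j\}$ iff some sender knows both $x_i$ and $x_j$. A leaf vertex of $\mathcal{G}$ has no outgoing arcs; $V_{\mathrm{out}}(\mathcal{G})$ is the number of non-leaf vertices. A leaf SCC of $\mathcal{G}$ is a strongly connected component with at least two vertices and no arc from it to a vertex outside it. A leaf SCC with vertex set $\mathcal{V}_S$ is message-disconnected iff there are two vertices in $\mathcal{V}_S$ that are not joined by any path in $\mathcal{U}$. *)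

From mathcomp Require Import all_boot.
From Stdlib Require Import ClassicalEpsilon.
Set Implicit Arguments. Unset Strict Implicit. Unset Printing Implicit Defensive.

(* An instance on N vertices/receivers 'I_N with S senders:
   - G : rel 'I_N, the information-flow graph: G j i  <=> arc (j -> i) <=> receiver i requests x_j.
   - M : 'I_S -> {set 'I_N}, M s = set of messages known to sender s.
   - Z : {set 'I_N}, messages that are the constant 0 (known to everyone,
         never transmitted); Z = set0 for an ordinary instance. *)

Definition zero_on N (Z : {set 'I_N}) (x : {ffun 'I_N -> bool}) : Prop :=
  forall j, j \in Z -> x j = false.

Definition is_index_code N S (G : rel 'I_N) (M : 'I_S -> {set 'I_N})
    (Z : {set 'I_N}) (l : 'I_S -> nat) : Prop :=
  exists (E : forall s : 'I_S, {ffun 'I_N -> bool} -> {ffun 'I_(l s) -> bool})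
         (D : 'I_N -> (forall s : 'I_S, {ffun 'I_(l s) -> bool}) -> bool -> 'I_N -> bool),
    (forall s x y, zero_on Z x -> zero_on Z y ->
        (forall j, j \in M s -> x j = y j) -> E s x = E s y) /\
    (forall x, zero_on Z x ->
        forall i j, G j i -> D i (fun s => E s x) (x i) j = x j).

Definition achievable N S (G : rel 'I_N) (M : 'I_S -> {set 'I_N}) (Z : {set 'I_N})
    (L : nat) : Prop :=
  exists l : 'I_S -> nat, \sum_(s < S) l s = L /\ is_index_code G M Z l.

Definition achievableb N S (G : rel 'I_N) (M : 'I_S -> {set 'I_N}) (Z : {set 'I_N})
    (L : nat) : bool :=
  if excluded_middle_informative (achievable G M Z L) then true else false.

Lemma achievableb_ex N S (G : rel 'I_N) (M : 'I_S -> {set 'I_N}) (Z : {set 'I_N}) :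
  (exists L, achievable G M Z L) -> exists L, achievableb G M Z L.
Proof.
case=> L HL; exists L; rewrite /achievableb.
by case: excluded_middle_informative.
Qed.

(* Minimum length of an index code (0 by convention if no code exists,
   which never happens when every non-constant message is known to some sender). *)
Definition opt_len N S (G : rel 'I_N) (M : 'I_S -> {set 'I_N}) (Z : {set 'I_N}) : nat :=
  match excluded_middle_informative (exists L, achievable G M Z L) with
  | left h => ex_minn (achievableb_ex h)
  | right _ => 0
  end.

Definition msg_adj N S (M : 'I_S -> {set 'I_N}) : rel 'I_N :=
  fun i j => [exists s, (i \in M s) && (j \in M s)].

Definition is_scc N (G : rel 'I_N) (C : {set 'I_N}) : bool :=
  [&& C != set0,
      [forall x in C, forall y in C, connect G x y] &
      [forall x in C, forall y, (connect G x y && connect G y x) ==> (y \in C)]].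

Definition is_leaf_scc N (G : rel 'I_N) (C : {set 'I_N}) : bool :=
  [&& is_scc G C, 1 < #|C| &
      [forall x in C, forall y, G x y ==> (y \in C)]].

Definition N_leaf_scc N (G : rel 'I_N) : nat :=
  #|[set C : {set 'I_N} | is_leaf_scc G C]|.

Definition V_out N (G : rel 'I_N) : nat :=
  #|[set i : 'I_N | [exists j, G i j]]|.

Definition msg_disconnected N S (M : 'I_S -> {set 'I_N}) (C : {set 'I_N}) : Prop :=
  exists i j, [/\ i \in C, j \in C & ~~ connect (msg_adj M) i j].

(* G' : G on 'I_n embedded via lift ord_max, plus the new vertex n (= ord_max,
   the paper's n+1) with the single arc v -> n. *)
Definition append_dummy n (G : rel 'I_n) (v : 'I_n) : rel 'I_n.+1 :=
  fun a b =>
    match unlift ord_max a, unlift ord_max b with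
    | Some a', Some b' => G a' b'
    | Some a', None => a' == v
    | None, _ => false
    end.

Definition lift_known n S (M : 'I_S -> {set 'I_n}) : 'I_S -> {set 'I_n.+1} :=
  fun s => [set lift ord_max j | j in M s].

From mathcomp Require Import all_boot.
From Stdlib Require Import ClassicalEpsilon FunctionalExtensionality.
Set Implicit Arguments. Unset Strict Implicit. Unset Printing Implicit Defensive.

(* The dummy vertex has no outgoing arc and only the arc from v enters it, so
   the leaf SCCs of G' are the lifted leaf SCCs of G except VS (which now has
   the arc v -> n+1 leaving it), and v already had an outgoing arc inside VS,
   so the non-leaf vertices do not change.

   For the code length, restricting a code for G' to messages with x_{n+1} = 0
   gives a code for G.  Conversely, a code for G serves G' as soon as the
   transmissions determine x_v.  Decoding propagates against the arcs: if two
   message vectors x, y produce the same transmissions and agree at b, they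
   agree at every a with a path a ~> b.  Inside the SCC VS they therefore
   agree everywhere or nowhere.  If they differed on VS, pick i, j in VS in
   different components of the message graph and splice x on the component
   of i with y elsewhere: every sender sees only x or only y, so the splice
   has the same transmissions as both, agrees with x at i and with y at j,
   and hence with both everywhere on VS, which is absurd. *)

Section AppendDummy.

Variables (n : nat) (G : rel 'I_n) (v : 'I_n).
Local Notation G' := (append_dummy G v).

Lemma append_dummy_lift a b : G' (lift ord_max a) (lift ord_max b) = G a b.
Proof. by rewrite /append_dummy !liftK. Qed.

Lemma append_dummy_lift_max a : G' (lift ord_max a) ord_max = (a == v).
Proof. by rewrite /append_dummy liftK unlift_none. Qed.

Lemma append_dummy_max b : G' ord_max b = false.
Proof. by rewrite /append_dummy unlift_none. Qed.

Lemma lift_max_neq (a : 'I_n) : (lift ord_max a == ord_max) = false.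
Proof. by rewrite eq_sym (negbTE (neq_lift _ _)). Qed.

Lemma connect_append_dummy_max b : connect G' ord_max b = (b == ord_max).
Proof.
apply/idP/eqP => [|->]; last exact: connect0.
by case/connectP => [[|c p]] /=; [move=> _ -> | rewrite append_dummy_max].
Qed.

Lemma connect_append_dummy_lift a b :
  connect G' (lift ord_max a) (lift ord_max b) = connect G a b.
Proof.
apply/connectP/connectP => -[p]; elim: p a => [|c p IHp] a /=.
- by move=> _ /lift_inj ->; exists [::].
- case/andP; case: (unliftP ord_max c) => [c'|] -> Gac.
    move=> /IHp pth /pth[q Gq ->]; exists (c' :: q) => //=.
    by rewrite -(append_dummy_lift a c') Gac.
  case: p {IHp} => [|d p] /=; last by rewrite append_dummy_max.
  by move=> _ /eqP; rewrite lift_max_neq.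
- by move=> _ ->; exists [::].
- case/andP => Gac /IHp pth /pth[q Gq ->].
  by exists (lift ord_max c :: q); rewrite //= append_dummy_lift Gac.
Qed.

Lemma mem_lift_set (C : {set 'I_n}) a :
  (lift ord_max a \in lift ord_max @: C) = (a \in C).
Proof. exact/mem_imset/lift_inj. Qed.

Lemma max_notin_lift_set (C : {set 'I_n}) : (ord_max \in lift ord_max @: C) = false.
Proof. by apply/imsetP => -[x _ /eqP]; rewrite eq_sym lift_max_neq. Qed.

Lemma is_scc_append_dummy_lift (C : {set 'I_n}) :
  is_scc G' (lift ord_max @: C) = is_scc G C.
Proof.
rewrite /is_scc imset_eq0; congr (_ && (_ && _)).
- apply/forall_inP/forall_inP => [H x xC | H _ /imsetP[x xC ->]].
    apply/forall_inP => y yC; rewrite -connect_append_dummy_lift.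
    by move/forall_inP: (H _ (imset_f _ xC)); apply; apply: imset_f.
  apply/forall_inP => _ /imsetP[y yC ->]; rewrite connect_append_dummy_lift.
  by move/forall_inP: (H x xC); apply.
- apply/forall_inP/forall_inP => [H x xC | H _ /imsetP[x xC ->]].
    apply/forallP => y; move/forallP: (H _ (imset_f _ xC)) => /(_ (lift ord_max y)).
    by rewrite !connect_append_dummy_lift mem_lift_set.
  apply/forallP => y'; case: (unliftP ord_max y') => [y|] ->.
    by rewrite !connect_append_dummy_lift mem_lift_set; move/forallP: (H x xC).
  by rewrite connect_append_dummy_max lift_max_neq andbF.
Qed.

Lemma is_leaf_scc_append_dummy_lift (C : {set 'I_n}) :
  is_leaf_scc G' (lift ord_max @: C) = is_leaf_scc G C && (v \notin C).
Proof.
rewrite /is_leaf_scc is_scc_append_dummy_lift (card_imset _ (@lift_inj _ _)).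
case: (is_scc G C) (1 < #|C|) => [] [] //=.
apply/forall_inP/andP => [H | [/forall_inP H vC] _ /imsetP[x xC ->]].
  split.
    apply/forall_inP => x xC; apply/forallP => y.
    move/forallP: (H _ (imset_f _ xC)) => /(_ (lift ord_max y)).
    by rewrite append_dummy_lift mem_lift_set.
  apply/negP => vC; move/forallP: (H _ (imset_f _ vC)) => /(_ ord_max).
  by rewrite append_dummy_lift_max eqxx max_notin_lift_set.
apply/forallP => y'; case: (unliftP ord_max y') => [y|] ->.
  by rewrite append_dummy_lift mem_lift_set; move/forallP: (H x xC).
rewrite append_dummy_lift_max max_notin_lift_set; apply/implyP => /eqP xv.
by rewrite -xv xC in vC.
Qed.

Lemma max_notin_leaf_scc_append_dummy (C' : {set 'I_n.+1}) :
  is_leaf_scc G' C' -> ord_max \notin C'.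
Proof.
case/and3P => /and3P[_ /forall_inP conn _] /card_gt1P[x [y [xC yC xy]]] _.
apply/negP => mC; have /forall_inP toC := conn _ mC.
move: (toC x xC) (toC y yC); rewrite !connect_append_dummy_max => /eqP xm /eqP ym.
by rewrite xm ym eqxx in xy.
Qed.

Lemma leaf_scc_append_dummy_lift (C' : {set 'I_n.+1}) :
  is_leaf_scc G' C' -> C' = lift ord_max @: [set a | lift ord_max a \in C'].
Proof.
move/max_notin_leaf_scc_append_dummy => mC'; apply/setP => y.
case: (unliftP ord_max y) => [a|] ->; first by rewrite mem_lift_set inE.
by rewrite max_notin_lift_set (negbTE mC').
Qed.

End AppendDummy.

Section StronglyConnectedComponents.

Variables (N : nat) (G : rel 'I_N).

Lemma scc_connect C x y : is_scc G C -> x \in C -> y \in C -> connect G x y.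
Proof. by case/and3P => _ /forall_inP H _ xC yC; move/forall_inP: (H x xC); apply. Qed.

Lemma scc_subset C D x : is_scc G C -> is_scc G D -> x \in C -> x \in D ->
  C \subset D.
Proof.
move=> sccC /and3P[_ _ /forall_inP maxD] xC xD; apply/subsetP => y yC.
by move/forallP: (maxD x xD) => /(_ y)/implyP; apply; rewrite !(scc_connect sccC).
Qed.

Lemma scc_unique C D x : is_scc G C -> is_scc G D -> x \in C -> x \in D -> C = D.
Proof.
move=> sccC sccD xC xD; apply/eqP.
by rewrite eqEsubset (scc_subset sccC sccD xC xD) (scc_subset sccD sccC xD xC).
Qed.

Lemma leaf_scc_out C x : is_leaf_scc G C -> x \in C -> exists y, G x y.
Proof.
case/and3P => sccC /card_gt1P[a [b [aC bC ab]]] _ xC.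
have [y yC xy] : exists2 y, y \in C & x != y.
  by case: (eqVneq x a) => [xa | ]; [exists b; rewrite // xa | exists a].
case/connectP: (scc_connect sccC xC yC) => -[|c p] /=.
  by move=> _ yx; rewrite yx eqxx in xy.
by case/andP => Gxc _ _; exists c.
Qed.

End StronglyConnectedComponents.

Lemma N_leaf_scc_append_dummy n (G : rel 'I_n) VS v :
  is_leaf_scc G VS -> v \in VS ->
  N_leaf_scc (append_dummy G v) = N_leaf_scc G - 1.
Proof.
move=> leafVS vVS; rewrite /N_leaf_scc.
set A := [set C | is_leaf_scc G C].
have -> : [set C' | is_leaf_scc (append_dummy G v) C'] =
          (fun C : {set 'I_n} => lift ord_max @: C) @: (A :\ VS).
  apply/setP => C'; rewrite inE; apply/idP/imsetP => [leafC' | [C]].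
    set C := [set a | lift ord_max a \in C'].
    have C'E : C' = lift ord_max @: C := leaf_scc_append_dummy_lift leafC'.
    move: leafC'; rewrite C'E is_leaf_scc_append_dummy_lift => /andP[leafC vC].
    by exists C; rewrite // !inE leafC andbT; apply: contraNneq vC => ->.
  rewrite !inE => /andP[CVS leafC] ->; rewrite is_leaf_scc_append_dummy_lift leafC.
  apply: contra CVS => vC; apply/eqP.
  have [[sccC _ _] [sccVS _ _]] := (and3P leafC, and3P leafVS).
  exact: scc_unique sccC sccVS vC vVS.
rewrite (card_imset _ (imset_inj (@lift_inj _ _))).
by rewrite (cardsD1 VS A) inE leafVS add1n subn1.
Qed.

Lemma V_out_append_dummy n (G : rel 'I_n) VS v :
  is_leaf_scc G VS -> v \in VS -> V_out (append_dummy G v) = V_out G.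
Proof.
move=> leafVS vVS; rewrite /V_out.
have -> : [set i | [exists j, append_dummy G v i j]] =
          lift ord_max @: [set i | [exists j, G i j]].
  apply/setP => y; case: (unliftP ord_max y) => [a|] ->; last first.
    by rewrite max_notin_lift_set inE; apply/existsP => -[j]; rewrite append_dummy_max.
  rewrite mem_lift_set !inE; apply/existsP/existsP => [[j'] | [j Gaj]].
    case: (unliftP ord_max j') => [b|] ->; first by rewrite append_dummy_lift; exists b.
    by rewrite append_dummy_lift_max => /eqP ->; apply: leaf_scc_out vVS.
  by exists (lift ord_max j); rewrite append_dummy_lift.
exact/card_imset/lift_inj.
Qed.

Lemma zero_on0 N (x : {ffun 'I_N -> bool}) : zero_on set0 x.
Proof. by move=> k; rewrite inE. Qed.

Section TransmissionsDetermineLeafScc.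

Variables (n S : nat) (G : rel 'I_n) (M : 'I_S -> {set 'I_n}) (l : 'I_S -> nat).
Variable E : forall s : 'I_S, {ffun 'I_n -> bool} -> {ffun 'I_(l s) -> bool}.
Variable D : 'I_n -> (forall s : 'I_S, {ffun 'I_(l s) -> bool}) -> bool -> 'I_n -> bool.
Hypothesis E_local : forall s x y, zero_on set0 x -> zero_on set0 y ->
  (forall j, j \in M s -> x j = y j) -> E s x = E s y.
Hypothesis D_correct : forall x, zero_on set0 x ->
  forall i j, G j i -> D i (fun s => E s x) (x i) j = x j.

Implicit Types x y : {ffun 'I_n -> bool}.
Local Notation out x := (fun s => E s x).

Definition splice i x y : {ffun 'I_n -> bool} :=
  [ffun k => if connect (msg_adj M) i k then x k else y k].

Lemma same_out_connect x y a b :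
  out x = out y -> connect G a b -> x b = y b -> x a = y a.
Proof.
move=> xy /connectP[p pth ->]; elim: p a pth => [|c p IHp] a //= /andP[Gac pth] xyl.
rewrite -(D_correct (zero_on0 x) Gac) -(D_correct (zero_on0 y) Gac).
by rewrite (IHp c pth xyl) xy.
Qed.

Lemma out_splice i x y : out x = out y -> out (splice i x y) = out x.
Proof.
move=> xy; apply: functional_extensionality_dep => s.
have [/exists_inP[k kM ik] | /exists_inPn notik] :=
  boolP [exists k in M s, connect (msg_adj M) i k].
  apply: E_local; try exact: zero_on0.
  move=> k' k'M; rewrite ffunE (connect_trans ik) //.
  by apply/connect1/existsP; exists s; rewrite kM k'M.
have -> : E s (splice i x y) = E s y.
  apply: E_local; try exact: zero_on0.
  by move=> k' k'M; rewrite ffunE (negbTE (notik k' k'M)).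
by have /(congr1 (fun o : forall s, _ => o s)) -> := xy.
Qed.

Lemma msg_disconnected_leaf_scc_determined VS v x y :
  is_leaf_scc G VS -> msg_disconnected M VS -> v \in VS ->
  out x = out y -> x v = y v.
Proof.
move=> /and3P[sccVS _ _] [i [j [iVS jVS notij]]] vVS xy.
apply/eqP/negPn/negP => xyv.
have differ d : d \in VS -> x d != y d.
  move=> dVS; apply: contra xyv => /eqP xyd; apply/eqP.
  exact: same_out_connect xy (scc_connect sccVS vVS dVS) xyd.
have zx : out (splice i x y) = out x := out_splice i xy.
have zi : splice i x y i = x i by rewrite ffunE connect0.
have := same_out_connect zx (scc_connect sccVS jVS iVS) zi.
by rewrite ffunE (negbTE notij) => yx; move: (differ j jVS); rewrite yx eqxx.
Qed.

End TransmissionsDetermineLeafScc.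

Lemma achievablebP N S (G : rel 'I_N) (M : 'I_S -> {set 'I_N}) Z L :
  reflect (achievable G M Z L) (achievableb G M Z L).
Proof. by rewrite /achievableb; case: excluded_middle_informative => h; constructor. Qed.

Lemma eq_opt_len N1 N2 S (G1 : rel 'I_N1) (M1 : 'I_S -> {set 'I_N1}) Z1
    (G2 : rel 'I_N2) (M2 : 'I_S -> {set 'I_N2}) Z2 :
  (forall L, achievable G1 M1 Z1 L <-> achievable G2 M2 Z2 L) ->
  opt_len G1 M1 Z1 = opt_len G2 M2 Z2.
Proof.
move=> same; rewrite /opt_len.
case: excluded_middle_informative => h1; case: excluded_middle_informative => h2.
- case: ex_minnP => m1 /achievablebP/same/achievablebP a1 min1.
  case: ex_minnP => m2 /achievablebP/same/achievablebP a2 min2.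
  by apply/eqP; rewrite eqn_leq min1 ?min2.
- by case: h2; case: h1 => L /same; exists L.
- by case: h1; case: h2 => L /same; exists L.
- by [].
Qed.

Lemma achievable_of_append_dummy n S (G : rel 'I_n) (M : 'I_S -> {set 'I_n}) v L :
  achievable (append_dummy G v) (lift_known M) [set ord_max] L ->
  achievable G M set0 L.
Proof.
case=> l [sum_l [E [D [E_local D_correct]]]]; exists l; split => //.
pose ext (x : {ffun 'I_n -> bool}) : {ffun 'I_n.+1 -> bool} :=
  [ffun k => if unlift ord_max k is Some k' then x k' else false].
have ext0 x : zero_on [set ord_max] (ext x).
  by move=> j; rewrite inE => /eqP ->; rewrite ffunE unlift_none.
exists (fun s x => E s (ext x)),
  (fun i o b j => D (lift ord_max i) o b (lift ord_max j)); split.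
- move=> s x y _ _ xy; apply: E_local => // _ /imsetP[k kM ->].
  by rewrite !ffunE liftK xy.
- move=> x _ i j Gji; have := D_correct _ (ext0 x) (lift ord_max i) (lift ord_max j).
  by rewrite append_dummy_lift !ffunE !liftK => ->.
Qed.

Lemma achievable_append_dummy n S (G : rel 'I_n) (M : 'I_S -> {set 'I_n}) VS v L :
  is_leaf_scc G VS -> msg_disconnected M VS -> v \in VS ->
  achievable G M set0 L ->
  achievable (append_dummy G v) (lift_known M) [set ord_max] L.
Proof.
move=> leafVS discVS vVS [l [sum_l [E [D [E_local D_correct]]]]].
exists l; split => //.
pose res (x : {ffun 'I_n.+1 -> bool}) : {ffun 'I_n -> bool} :=
  [ffun k => x (lift ord_max k)].
(* The dummy receiver reads x_v off any message vector producing the observed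
   transmissions; by [msg_disconnected_leaf_scc_determined] all choices agree. *)
pose decode_v (o : forall s : 'I_S, {ffun 'I_(l s) -> bool}) : bool :=
  match excluded_middle_informative (exists x, (fun s => E s x) = o) with
  | left h => proj1_sig (constructive_indefinite_description _ h) v
  | right _ => false
  end.
exists (fun s x => E s (res x)), (fun i' o b j' =>
  match unlift ord_max i', unlift ord_max j' with
  | Some i, Some j => D i o b j
  | None, _ => decode_v o
  | _, None => false
  end); split.
- move=> s x y _ _ xy; apply: E_local; try exact: zero_on0.
  by move=> j jM; rewrite !ffunE xy // mem_lift_set.
- move=> x _ i' j'.
  case: (unliftP ord_max i') => [i|] ->; case: (unliftP ord_max j') => [j|] ->;
    rewrite ?append_dummy_lift ?append_dummy_lift_max ?append_dummy_max ?liftK //.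
  + by move=> Gji; have := D_correct (res x) (zero_on0 _) i j Gji; rewrite !ffunE.
  + move=> /eqP ->; rewrite /decode_v.
    case: excluded_middle_informative => [h | []]; last by exists (res x).
    case: (constructive_indefinite_description _ h) => y /= yx.
    have := msg_disconnected_leaf_scc_determined E_local D_correct leafVS discVS vVS yx.
    by rewrite ffunE.
Qed.

Theorem proposition1 (n S : nat) (G : rel 'I_n) (M : 'I_S -> {set 'I_n})
    (G_irr : irreflexive G)
    (M_cover : forall j : 'I_n, exists s : 'I_S, j \in M s)
    (VS : {set 'I_n}) (VS_leaf : is_leaf_scc G VS)
    (VS_disc : msg_disconnected M VS)
    (v : 'I_n) (v_in : v \in VS) :
  N_leaf_scc (append_dummy G v) = N_leaf_scc G - 1
  /\ opt_len (append_dummy G v) (lift_known M) [set ord_max] = opt_len G M set0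
  /\ V_out (append_dummy G v) = V_out G.
Proof.
split; first exact: N_leaf_scc_append_dummy VS_leaf v_in.
split; last exact: V_out_append_dummy VS_leaf v_in.
apply: eq_opt_len => L; split; first exact: achievable_of_append_dummy.
exact: achievable_append_dummy VS_leaf VS_disc v_in.
Qed.
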